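(* Let $k>4$ be an odd integer. Assume that when the procedure $\mathrm{Permutations}$ is run on a list of $k$ pairwise distinct elements $(x_0,x_1,\dots,x_{k-1})$ (i.e. $\mathrm{Permutations}(L,0,\mathrm{Func})$ with $L=(x_0,\dots,x_{k-1})$), the last permutation it produces is $(x_1,x_0,x_2,x_3,\dots,x_{k-1})$. Then, when $\mathrm{Permutations}$ is run on the list $(0,1,2,\dots,k)$ of $k+1$ elements, each of the $k+1$ elements is inserted exactly once at the beginning of the list (i.e. the $k+1$ recursive calls $\mathrm{Permutations}(L,1,\mathrm{Func})$ made by the top-level invocation are made with pairwise distinct elements at position $0$), and the last permutation produced is $(1,4,3,5,6,7,8,\dots,k,2,0)$.
   Context: Lists are 0-indexed. For a list $L$, $\mathrm{extract}(L,j)$ removes the element at position $j$ from $L$ and returns it; $\mathrm{Insert}(L,i,x)$ inserts $x$ into $L$ so that it occupies position $i$, shifting the elements previously at positions $\ge i$ one step to the right. Each combined operation $\mathrm{Insert}(L,i,\mathrm{extract}(L,j))$ first extracts, then inserts, so the length of $L$ is unchanged. The recursive procedure $\mathrm{Permutations}(L,i,\mathrm{Func})$ (with $\mathrm{Func}$ a callback) is: let $n=\mathrm{length}(L)$. If $i\ge n-1$, call $\mathrm{Func}(L)$. Otherwise: (1) call $\mathrm{Permutations}(L,i+1,\mathrm{Func})$; (2) do $\mathrm{Insert}(L,i,\mathrm{extract}(L,i+1))$ and call $\mathrm{Permutations}(L,i+1,\mathrm{Func})$; (3) repeat $\max(n-i-3,0)$ times: if $n-i$ is even, do $\mathrm{Insert}(L,i,\mathrm{extract}(L,n-1))$,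 otherwise do $\mathrm{Insert}(L,i,\mathrm{extract}(L,i+1))$; then call $\mathrm{Permutations}(L,i+1,\mathrm{Func})$; (4) if $n-i>2$: do $\mathrm{Insert}(L,i,\mathrm{extract}(L,i+1))$ and call $\mathrm{Permutations}(L,i+1,\mathrm{Func})$. The main call is $\mathrm{Permutations}(L,0,\mathrm{Func})$; each list passed to $\mathrm{Func}$ is a ''produced permutation''. A call $\mathrm{Permutations}(L,i,\mathrm{Func})$ modifies only positions $\ge i$, and its effect on that suffix depends only on the suffix length $n-i$. The ''last permutation produced'' when run on a list is the state of the list when the main call returns (which equals the argument of the last call to $\mathrm{Func}$). *)

From mathcomp Require Import all_boot.
Set Implicit Arguments. Unset Strict Implicit. Unset Printing Implicit Defensive.

Section Perm.
Variable T : Type.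

Definition extract_rest (L : seq T) (j : nat) : seq T := take j L ++ drop j.+1 L.

(* Insert(L, i, extract(L, j)); leaves L unchanged if j is out of range
   (never happens in the procedure) *)
Definition move (L : seq T) (i j : nat) : seq T :=
  match drop j L with
  | [::] => L
  | x :: _ => let L' := extract_rest L j in take i L' ++ x :: drop i L'
  end.

(* One invocation of Permutations(L, i, Func) with i < n - 1, given the
   recursive procedure [rec] standing for Permutations(_, i+1, Func).
   Returns (final list, produced permutations in order,
            list of the arguments passed to the recursive calls, in order). *)
Definition perm_level (rec : seq T -> seq T * seq (seq T)) (L : seq T) (i : nat)
  : seq T * seq (seq T) * seq (seq T) :=
  let n := size L in
  let call (st : seq T * seq (seq T) * seq (seq T)) (L0 : seq T) :=
      let '(_, P, C) := st in
      let '(L1, P1) := rec L0 in (L1, P ++ P1, rcons C L0) in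
  let st1 := call (L, [::], [::]) L in
  let st2 := call st1 (move st1.1.1 i i.+1) in
  let j := if ~~ odd (n - i) then n.-1 else i.+1 in
  let st3 := iter (n - i - 3) (fun st => call st (move st.1.1 i j)) st2 in
  if 2 < n - i then call st3 (move st3.1.1 i i.+1) else st3.

Fixpoint perm_rec (fuel : nat) (L : seq T) (i : nat) : seq T * seq (seq T) :=
  if (size L).-1 <= i then (L, [:: L]) else
  match fuel with
  | 0 => (L, [::])
  | fuel'.+1 => let '(F, P, _) := perm_level (fun L' => perm_rec fuel' L' i.+1) L i
                in (F, P)
  end.

(* Main call Permutations(L, 0, Func) (fuel size L is sufficient). *)
Definition permutations (L : seq T) : seq T * seq (seq T) := perm_rec (size L) L 0.

(* The last permutation produced = state of L when the main call returns. *)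
Definition last_perm (L : seq T) : seq T := (permutations L).1.

(* The arguments of the recursive calls Permutations(L, 1, Func) made by the
   top-level invocation (assuming size L >= 2). *)
Definition top_calls (L : seq T) : seq (seq T) :=
  (perm_level (fun L' => perm_rec (size L).-1 L' 1) L 0).2.

End Perm.

From Pilot Require Import Defs.
From mathcomp Require Import all_boot zify.
Set Implicit Arguments. Unset Strict Implicit. Unset Printing Implicit Defensive.

(* The top-level call on a list of even length k+1 makes k+1 recursive calls
   on the suffix of length k; between them it swaps positions 0 and 1, then
   k-2 times moves the last entry to the front, then swaps positions 0 and 1
   again.  The procedure only rearranges entries, so it commutes with any
   relabelling of them, and the hypothesis on lists of distinct entries says
   that every recursive call swaps the entries at positions 1 and 2 of the
   whole list.  Starting from [0, 1, ..., k], the arguments of the second call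
   and of the k-2 middle calls are then the successive right rotations of
   [2, 0, 3, ..., k] with the entry 1 inserted at position 2: a call swaps 1
   to position 1 and the next move to the front shifts it back to position 2.
   Hence the calls begin with 0, 2, k, k-1, ..., 3, 1, all distinct, and the
   last rotation [3, ..., k, 2, 0] leads to the final list
   [1, 4, 3, 5, ..., k, 2, 0]. *)

Lemma last_scanl (A B : Type) (f : A -> B -> A) x s :
  last x (scanl f x s) = foldl f x s.
Proof. by elim: s x => //= b s IHs x; rewrite IHs. Qed.

Lemma foldl_nseq (A B : Type) (f : A -> B -> A) x m b :
  foldl f x (nseq m b) = iter m (f^~ b) x.
Proof. by elim: m x => //= m IHm x; rewrite IHm -iterSr. Qed.

Lemma scanl_morph_in (A B C D : Type) (P : pred A) (f : A -> B -> A)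
    (g : C -> D -> C) (h : A -> C) (sigma : B -> D) :
  (forall x b, P x -> P (f x b)) ->
  (forall x b, P x -> g (h x) (sigma b) = h (f x b)) ->
  forall x s, P x -> scanl g (h x) (map sigma s) = map h (scanl f x s).
Proof.
by move=> Pf fgh x s; elim: s x => //= b s IHs x Px; rewrite fgh // IHs ?Pf.
Qed.

Section Rotation.
Variables (T A : Type) (a : A).

Lemma head_scanl_rotr1 x0 (P Q : seq T) m : size Q = m ->
  map (head x0) (scanl (fun s _ => rotr 1 s) (P ++ Q) (nseq m a)) = rev Q.
Proof.
move<-; elim/last_ind: Q P => [|Q w IHQ] P //.
by rewrite size_rcons /= -rcons_cat rotr1_rcons -cat_cons IHQ rev_rcons.
Qed.

Lemma last_scanl_rotr1 (P Q : seq T) m : size Q = m ->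
  last (P ++ Q) (scanl (fun s _ => rotr 1 s) (P ++ Q) (nseq m a)) = Q ++ P.
Proof.
move<-; elim/last_ind: Q P => [|Q w IHQ] P /=; first by rewrite cats0.
by rewrite size_rcons /= -rcons_cat rotr1_rcons -cat_cons IHQ cat_rcons.
Qed.

End Rotation.

Section Move.
Variable T : Type.
Implicit Types (L : seq T) (x : T).

Lemma move_cons x L i j : move (x :: L) i.+1 j.+1 = x :: move L i j.
Proof. by rewrite /move /extract_rest /=; case: (drop j L). Qed.

Lemma move_map U (g : T -> U) L i j : move (map g L) i j = map g (move L i j).
Proof.
rewrite /move /extract_rest -map_drop.
case: (drop j L) => //= x _.
by rewrite -map_take -map_drop -map_cat -map_take -map_drop map_cat.
Qed.

Lemma move_rcons_last L x : move (rcons L x) 0 (size L) = x :: L.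
Proof.
rewrite /move /extract_rest -cats1 drop_size_cat //= take0 drop0.
by rewrite take_size_cat // drop_oversize ?size_cat ?addn1 // cats0.
Qed.

End Move.

Definition level_moves (n i : nat) : seq nat :=
  let j := if ~~ odd (n - i) then n.-1 else i.+1 in
  i.+1 :: nseq (n - i - 3) j ++ (if 2 < n - i then [:: i.+1] else [::]).

Lemma level_moves_succ n i :
  0 < n -> level_moves n.+1 i.+1 = map succn (level_moves n i).
Proof.
move=> n_gt0; rewrite /level_moves subSS /= map_cat map_nseq.
by rewrite (fun_if succn) prednK //; case: (2 < n - i).
Qed.

Section Level.
Variable T : Type.
Implicit Types (L : seq T) (rec : seq T -> seq T * seq (seq T)).

Definition level_call rec (st : seq T * seq (seq T) * seq (seq T)) L :=
  ((rec L).1, st.1.2 ++ (rec L).2, rcons st.2 L).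

Lemma perm_level_foldl rec L i :
  perm_level rec L i =
  foldl (fun st j => level_call rec st (move st.1.1 i j))
        (level_call rec (L, [::], [::]) L) (level_moves (size L) i).
Proof.
have call_eq st L0 : (let '(_, P, C) := st in
    let '(L1, P1) := rec L0 in (L1, P ++ P1, rcons C L0)) = level_call rec st L0.
  by case: st => [[? ?] ?]; rewrite /level_call /=; case: (rec L0).
rewrite /perm_level /level_moves; cbv zeta; rewrite !call_eq.
set j := if ~~ odd _ then _ else _.
rewrite (eq_iter (f' := fun st => level_call rec st (move st.1.1 i j)));
  last by move=> st; rewrite call_eq.
have -> : (let '(L1, P1) := rec L in (L1, [::] ++ P1, rcons [::] L)) =
          level_call rec (L, [::], [::]) L by rewrite -call_eq.
by rewrite /= foldl_cat foldl_nseq; case: ifP.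
Qed.

Definition level_args (r : seq T -> seq T) L i :=
  scanl (fun c j => move (r c) i j) L (level_moves (size L) i).

Lemma foldl_level_call rec i st c ms
    (F := foldl (fun st j => level_call rec st (move st.1.1 i j)) st ms)
    (cs := scanl (fun c j => move (rec c).1 i j) c ms) :
  st.1.1 = (rec c).1 -> F.1.1 = (rec (last c cs)).1 /\ F.2 = st.2 ++ cs.
Proof.
rewrite {}/F {}/cs.
elim: ms st c => [|j ms IHms] st c /= st_c; first by rewrite cats0.
by rewrite -cat_rcons st_c; apply: IHms.
Qed.

Lemma perm_level_trace rec L i (r := fun c => (rec c).1) :
  (perm_level rec L i).1.1 = r (last L (level_args r L i)) /\
  (perm_level rec L i).2 = L :: level_args r L i.
Proof. by rewrite perm_level_foldl; apply: foldl_level_call. Qed.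

End Level.

Lemma perm_rec_final (T : Type) f (L : seq T) i :
  (perm_rec f.+1 L i).1 =
  if (size L).-1 <= i then L
  else (perm_level (fun L' => perm_rec f L' i.+1) L i).1.1.
Proof. by rewrite /=; case: ifP => // _; case: perm_level => [[]]. Qed.

Section Recursion.
Variable T : Type.
Implicit Types (L : seq T) (x : T).

Lemma level_args_cons x (r r' : seq T -> seq T) L i :
  (forall c, r' (x :: c) = x :: r c) -> 0 < size L ->
  level_args r' (x :: L) i.+1 = map (cons x) (level_args r L i).
Proof.
move=> rE L_gt0; rewrite /level_args (level_moves_succ i L_gt0).
by apply: (scanl_morph_in (P := predT)) => // c j _; rewrite rE move_cons.
Qed.

Lemma level_args_map U (g : T -> U) (r : seq T -> seq T) (r' : seq U -> seq U)
    L i :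
  (forall c, r' (map g c) = map g (r c)) ->
  level_args r' (map g L) i = map (map g) (level_args r L i).
Proof.
move=> rE; rewrite /level_args size_map -{1}[level_moves _ _]map_id.
by apply: (scanl_morph_in (P := predT)) => // c j _; rewrite rE move_map.
Qed.

Lemma perm_rec_cons f x L i :
  (perm_rec f (x :: L) i.+1).1 = x :: (perm_rec f L i).1.
Proof.
elim: f L i => [|f IHf] L i; first by rewrite /=; do 2!case: ifP.
rewrite !perm_rec_final /=.
have -> : (size L <= i.+1) = ((size L).-1 <= i) by case: (size L).
case: leqP => // i_lt; rewrite !(proj1 (perm_level_trace _ _ _)).
rewrite (level_args_cons (r := fun c => (perm_rec f c i.+1).1)) ?last_map //.
by case: (size L) i_lt.
Qed.

Lemma perm_rec_map U (g : T -> U) f L i :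
  (perm_rec f (map g L) i).1 = map g (perm_rec f L i).1.
Proof.
elim: f L i => [|f IHf] L i; first by rewrite /=; do 2!case: ifP.
rewrite !perm_rec_final size_map; case: ifP => // _.
rewrite !(proj1 (perm_level_trace _ _ _)).
by rewrite (level_args_map (r := fun c => (perm_rec f c i.+1).1)) ?last_map.
Qed.

Lemma last_perm_map U (g : T -> U) L :
  last_perm (map g L) = map g (last_perm L).
Proof. by rewrite /last_perm /Defs.permutations size_map perm_rec_map. Qed.

End Recursion.

Lemma last_perm_swap01 k : 1 < k ->
  (forall L : seq nat, size L = k -> uniq L ->
     last_perm L = [:: nth 0 L 1, nth 0 L 0 & drop 2 L]) ->
  forall (T : Type) (a b : T) s,
  size s = k - 2 -> last_perm [:: a, b & s] = [:: b, a & s].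
Proof.
move=> k_gt1 swap_iota T a b s size_s; set L := [:: a, b & s].
have size_L : size L = k by rewrite /= size_s; lia.
have map_L : map (nth a L) (iota 0 k) = L.
  by rewrite -size_L; exact: (mkseq_nth a L).
have k_gt0 := ltnW k_gt1.
rewrite -{1}map_L last_perm_map swap_iota ?size_iota ?iota_uniq //= map_drop.
by rewrite map_L !nth_iota //= drop0.
Qed.

Definition insert_at2 (T : Type) (y : T) (s : seq T) : seq T :=
  if s is a :: b :: s' then [:: a, b, y & s'] else s.

Lemma head_insert_at2 (T : Type) (x0 y : T) s :
  head x0 (insert_at2 y s) = head x0 s.
Proof. by case: s => [|a [|b s]]. Qed.

Section TopLevel.
Variables (k : nat) (r : seq nat -> seq nat).
Hypotheses (k_gt4 : 4 < k) (k_odd : odd k).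
Hypothesis r_swap12 :
  forall a b c s, size s = k - 2 -> r [:: a, b, c & s] = [:: a, c, b & s].

Lemma level_moves_top : level_moves k.+1 0 = 1 :: rcons (nseq (k - 2) k) 1.
Proof.
rewrite /level_moves subn0 /= k_odd -cats1 ifT; last lia.
by have -> : k.+1 - 3 = k - 2 by lia.
Qed.

Lemma move_last_insert_at2 s :
  size s = k -> move (r (insert_at2 1 s)) 0 k = insert_at2 1 (rotr 1 s).
Proof.
case: s => [|a [|b s]] /= size_s; try lia.
case/lastP: s size_s => [|s w] /=; rewrite ?size_rcons => size_s; first lia.
rewrite r_swap12 ?size_rcons; last lia.
have -> : k = size [:: a, 1, b & s] by rewrite /=; lia.
by rewrite -!rcons_cons rotr1_rcons move_rcons_last.
Qed.

Lemma level_args_top :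
  level_args r (iota 0 k.+1) 0 =
  insert_at2 1 ([:: 2; 0] ++ iota 3 (k - 2)) ::
  rcons [seq insert_at2 1 s
          | s <- scanl (fun t _ => rotr 1 t) ([:: 2; 0] ++ iota 3 (k - 2))
                       (nseq (k - 2) tt)]
        [:: 1, 3, 4 & iota 5 (k - 4) ++ [:: 2; 0]].
Proof.
set s0 := [:: 2; 0] ++ _; set rots := scanl _ s0 _.
have middle :
    scanl (fun c j => move (r c) 0 j) (insert_at2 1 s0) (nseq (k - 2) k) =
    map (insert_at2 1) rots.
  rewrite -[nseq _ k](map_nseq _ (fun _ => k) tt).
  apply: (scanl_morph_in (P := fun s => size s == k)).
  - by move=> s _ /eqP size_s; rewrite size_rotr size_s.
  - by move=> s _ /eqP; apply: move_last_insert_at2.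
  - by rewrite /= size_iota; lia.
have last_rots : last s0 rots = iota 3 (k - 2) ++ [:: 2; 0].
  exact/last_scanl_rotr1/size_iota.
have iota_k : iota 0 k.+1 = [:: 0, 1, 2 & iota 3 (k - 2)].
  by rewrite (_ : k.+1 = (k - 2).+3) //; lia.
rewrite /level_args size_iota level_moves_top iota_k /= r_swap12 ?size_iota //=.
rewrite (_ : move _ 0 1 = insert_at2 1 s0) //.
rewrite scanl_rcons foldl_rcons -last_scanl middle last_map last_rots.
congr (_ :: rcons _ _); rewrite (_ : k - 2 = (k - 4).+2) /=; last lia.
by rewrite r_swap12 // size_cat size_iota /=; lia.
Qed.

End TopLevel.

Theorem lemma1 (k : nat) :
  4 < k -> odd k ->
  (forall L : seq nat, size L = k -> uniq L ->
     last_perm L = [:: nth 0 L 1, nth 0 L 0 & drop 2 L]) ->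
  size (top_calls (iota 0 k.+1)) = k.+1 /\
  uniq [seq head 0 c | c <- top_calls (iota 0 k.+1)] /\
  last_perm (iota 0 k.+1) = [:: 1; 4; 3] ++ iota 5 (k - 4) ++ [:: 2; 0].
Proof.
move=> k_gt4 k_odd swap_iota.
pose r (c : seq nat) := (perm_rec k c 1).1.
have r_swap12 a b c s : size s = k - 2 -> r [:: a, b, c & s] = [:: a, c, b & s].
  move=> size_s; have size_bcs : size [:: b, c & s] = k by rewrite /= size_s; lia.
  have k_gt1 : 1 < k by lia.
  have := last_perm_swap01 k_gt1 swap_iota b c size_s.
  by rewrite /last_perm /Defs.permutations size_bcs /r perm_rec_cons => ->.
have [final calls] := perm_level_trace (fun c => perm_rec k c 1) (iota 0 k.+1) 0.
have -> : top_calls (iota 0 k.+1) = iota 0 k.+1 :: level_args r (iota 0 k.+1) 0.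
  by rewrite /top_calls size_iota calls.
have -> : last_perm (iota 0 k.+1) =
          r (last (iota 0 k.+1) (level_args r (iota 0 k.+1) 0)).
  rewrite /last_perm /Defs.permutations size_iota perm_rec_final size_iota.
  by rewrite ifF ?final //; lia.
rewrite (level_args_top k_gt4 k_odd r_swap12) /= last_rcons.
split; [|split].
- by rewrite size_rcons size_map size_scanl size_nseq; lia.
- rewrite map_rcons -map_comp (eq_map (head_insert_at2 0 1)).
  rewrite (head_scanl_rotr1 tt 0 [:: 2; 0] (size_iota 3 (k - 2))) /=.
  rewrite rcons_uniq rev_uniq iota_uniq.
  by rewrite !(mem_rcons, inE, mem_rev, mem_iota); lia.
- by rewrite r_swap12 // size_cat size_iota /=; lia.
Qed.
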